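(* Let $k\geq 2$ be an integer. If $G$ is a cactus on $n$ vertices, then $\alpha_k(G)\geq \Big\lfloor\frac{k}{k+1}\,n\Big\rfloor+1$.
   Context: All graphs are finite and simple, with nonempty vertex set. For a graph $G$, a $k$-sparse set is a set of vertices inducing a subgraph of maximum degree at most $k$, and $\alpha_k(G)$ denotes the maximum size of a $k$-sparse set in $G$. A cactus is a graph (not necessarily connected) in which every block is a cycle, a single edge, or a single vertex. *)

From mathcomp Require Import all_boot.
Set Implicit Arguments. Unset Strict Implicit. Unset Printing Implicit Defensive.

Section Graphs.
Variables (T : finType) (e : rel T).

Definition simple_graph : Prop := symmetric e /\ irreflexive e.

Definition nbhd_in (S : {set T}) (v : T) : {set T} := [set u in S | e v u].

Definition induced_rel (S : {set T}) : rel T :=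
  [rel x y | [&& x \in S, y \in S & e x y]].

(* S induces a connected subgraph (the empty set counts as connected) *)
Definition connected_set (S : {set T}) : Prop :=
  forall x y, x \in S -> y \in S -> connect (induced_rel S) x y.

Definition nonseparable (S : {set T}) : Prop :=
  S != set0 /\ connected_set S /\ (forall v, v \in S -> connected_set (S :\ v)).

Definition block (B : {set T}) : Prop :=
  nonseparable B /\ (forall C : {set T}, B \subset C -> nonseparable C -> C = B).

Definition induces_cycle (S : {set T}) : Prop :=
  3 <= #|S| /\ connected_set S /\ (forall v, v \in S -> #|nbhd_in S v| = 2).

Definition induces_edge (S : {set T}) : Prop :=
  exists x y, [/\ x != y, e x y & S = [set x; y]].
Definition induces_vertex (S : {set T}) : Prop := exists x, S = [set x].

Definition cactus : Prop :=
  forall B : {set T}, block B -> [\/ induces_cycle B, induces_edge B | induces_vertex B].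

Definition k_sparse (k : nat) (S : {set T}) : bool :=
  [forall v in S, #|nbhd_in S v| <= k].

Definition alpha_k (k : nat) : nat := \max_(S : {set T} | k_sparse k S) #|S|.

End Graphs.

From mathcomp Require Import all_boot zify.
From Stdlib Require Import Classical.
Set Implicit Arguments. Unset Strict Implicit. Unset Printing Implicit Defensive.

(* A vertex x outside a connected set W of a cactus has at most two neighbours
   in W: a minimal counterexample W would make x together with W a 2-connected
   set, hence part of a block, but in a cycle, an edge or a vertex every degree is
   at most 2.  Consequently every set U of at least two vertices of a cactus
   contains a nonempty part X, all of whose vertices have degree at most 2 in U,
   that is attached to the rest of U only through a single vertex v.

   The theorem follows from a weighted statement proved by induction on |U|: if
   every vertex u of U has a capacity c u <= k, then deleting some D with
   (k+1)|D| < sum_u (k+1 - c u) leaves every remaining vertex u with at most c u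
   neighbours.  Each step deletes a small set inside a piece A of U (X, X with v,
   a vertex of capacity 0, or a path y z z' through a vertex y of degree 2 and
   capacity 1), decreases the capacities outside A by the degrees into what is
   left of A, and recurses on U minus A.  For c = k the complement of D is a
   k-sparse set with more than kn/(k+1) vertices. *)


Lemma maximal_superset (T : finType) (P : {set T} -> Prop) (S : {set T}) :
  P S -> exists B : {set T},
    [/\ S \subset B, P B & forall C : {set T}, B \subset C -> P C -> C = B].
Proof.
elim: {S}_.+1 {-2}S (ltnSn #|~: S|) => // n IH S ltSn PS.
have [[C [sSC PC neCS]] | noC] :=
  classic (exists C : {set T}, [/\ S \subset C, P C & C <> S]).
  have ltCS : #|~: C| < #|~: S|.
    by apply: proper_card; rewrite properC properEneq sSC andbT eq_sym; apply/eqP.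
  have [B [sCB PB maxB]] := IH C (leq_trans ltCS ltSn) PC.
  by exists B; split=> //; apply: subset_trans sCB.
exists S; split=> // C sSC PC; apply: NNPP => neCS.
by apply: noC; exists C.
Qed.

Section Cactus.
Variables (T : finType) (e : rel T).
Hypotheses (e_sym : symmetric e) (e_irr : irreflexive e).

Local Notation connect_in S := (connect (induced_rel e S)).

Definition component (S : {set T}) (a : T) : {set T} := [set u in S | connect_in S a u].

Lemma induced_rel_sym (S : {set T}) : symmetric (induced_rel e S).
Proof. by move=> a b; rewrite /induced_rel /= e_sym andbCA. Qed.

Lemma connect_in_sym (S : {set T}) a b : connect_in S a b = connect_in S b a.
Proof. exact: (sym_connect_sym (@induced_rel_sym S)). Qed.

Lemma connect_in_edge (S : {set T}) a b :
  a \in S -> b \in S -> e a b -> connect_in S a b.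
Proof. by move=> aS bS eab; apply: connect1; apply/and3P. Qed.

Lemma connect_in_sub (S1 S2 : {set T}) a b :
  S1 \subset S2 -> connect_in S1 a b -> connect_in S2 a b.
Proof.
move=> sS; apply: connect_sub => {}a {}b /and3P [aS bS eab].
by apply: connect_in_edge; rewrite ?(subsetP sS).
Qed.

Lemma connected_set_to (S : {set T}) z : z \in S ->
  (forall a, a \in S -> connect_in S a z) -> connected_set e S.
Proof.
move=> zS toz a b aS bS; apply: connect_trans (toz _ aS) _.
by rewrite connect_in_sym; apply: toz.
Qed.

Lemma connected_setU1 x (S : {set T}) w :
  connected_set e S -> w \in S -> e x w -> connected_set e (x |: S).
Proof.
move=> cS wS exw; apply: (@connected_set_to _ w); first by rewrite setU1r.
move=> a; case/setU1P => [-> | aS].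
  by apply: connect_in_edge; rewrite ?setU11 ?setU1r.
exact: connect_in_sub (subsetUr _ _) (cS _ _ aS wS).
Qed.

Lemma mem_component (S : {set T}) a : a \in S -> a \in component S a.
Proof. by move=> aS; rewrite inE aS connect0. Qed.

Lemma component_closed (S : {set T}) a u b :
  u \in component S a -> b \in S -> e u b -> b \in component S a.
Proof.
rewrite !inE => /andP [uS au] bS eub.
by rewrite bS (connect_trans au) // connect_in_edge.
Qed.

Lemma connect_in_component (S : {set T}) a b c :
  b \in component S a -> connect_in S b c -> connect_in (component S a) b c.
Proof.
move=> bC /connectP [p pth ->] {c}.
elim: p b bC pth => [|c p IHp] b bC /=; first by rewrite connect0.
case/andP=> /and3P [_ cS ebc] pth.
have cC := component_closed bC cS ebc.
by apply: connect_trans (IHp c cC pth); apply: connect_in_edge.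
Qed.

Lemma connected_component (S : {set T}) a : a \in S -> connected_set e (component S a).
Proof.
move=> aS; apply: (connected_set_to (mem_component aS)) => u uC.
rewrite connect_in_sym; apply: connect_in_component (mem_component aS) _.
by case/setIdP: uC.
Qed.

Lemma connected_setD_component (W : {set T}) z a :
  connected_set e W -> z \in W -> connected_set e (W :\: component (W :\ z) a).
Proof.
set K := component _ a => cW zW.
have zK : z \notin K by rewrite !inE eqxx.
have zWK : z \in W :\: K by rewrite inE zK.
apply: (connected_set_to zWK) => p pWK.
have /connectP [s pth zE] := cW p z (subsetP (subsetDl _ _) _ pWK) zW.
elim: s p pWK pth zE => [|b s IHs] p pWK /=; first by move=> _ ->; rewrite connect0.
case/andP=> /and3P [pW bW epb] pth zE.
have [-> | pz] := eqVneq p z; first exact: connect0.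
have bWK : b \in W :\: K.
  rewrite inE bW andbT; apply/negP => bK.
  have pK : p \in K by apply: component_closed bK _ _; rewrite ?inE ?pz // e_sym.
  by move: pWK; rewrite inE pK.
by apply: connect_trans (IHs b bWK pth zE); apply: connect_in_edge.
Qed.

Lemma nbhd_in_sub (S : {set T}) u : nbhd_in e S u \subset S.
Proof. by apply/subsetP => w; case/setIdP. Qed.

Lemma nbhd_in_mono (A B : {set T}) u :
  A \subset B -> nbhd_in e A u \subset nbhd_in e B u.
Proof. by move=> sAB; apply/subsetP => w /setIdP [wA euw]; rewrite inE (subsetP sAB). Qed.

Lemma nbhd_in_set0 u : nbhd_in e set0 u = set0.
Proof. by apply/setP => w; rewrite !inE. Qed.

Lemma nbhd_in_setD (S B : {set T}) u : nbhd_in e (S :\: B) u = nbhd_in e S u :\: B.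
Proof. by apply/setP => w; rewrite !inE andbA. Qed.

Lemma edge_neq a b : e a b -> a != b.
Proof. by apply: contraTneq => ->; rewrite e_irr. Qed.

Lemma card_nbhd_lt (S : {set T}) u : u \in S -> #|nbhd_in e S u| < #|S|.
Proof.
move=> uS; apply: proper_card; rewrite properEneq nbhd_in_sub andbT.
by apply/eqP => E; move: uS; rewrite -E inE e_irr andbF.
Qed.

Lemma nbhd_in_set2 (S : {set T}) y z z' : nbhd_in e S y = [set z; z'] ->
  [/\ z \in S, z' \in S, e y z & e y z'].
Proof.
move=> Ny; have /setIdP [zS eyz] : z \in nbhd_in e S y by rewrite Ny set21.
by have /setIdP [z'S eyz'] : z' \in nbhd_in e S y by rewrite Ny set22.
Qed.

Lemma sum_card_nbhd_sym (P Q : {set T}) :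
  \sum_(u in P) #|nbhd_in e Q u| = \sum_(y in Q) #|nbhd_in e P y|.
Proof.
have cardE (A : {set T}) u : #|nbhd_in e A u| = \sum_(y in A) e u y.
  rewrite -sum1_card big_mkcond [RHS]big_mkcond; apply: eq_bigr => y _.
  by rewrite inE; case: (y \in A); case: (e u y).
under eq_bigr do rewrite cardE; rewrite exchange_big /=.
by apply: eq_bigr => y _; rewrite cardE; apply: eq_bigr => u _; rewrite e_sym.
Qed.

Hypothesis e_cactus : cactus e.

Lemma block_card_nbhd_le2 (B : {set T}) x :
  block e B -> x \in B -> #|nbhd_in e B x| <= 2.
Proof.
move=> blockB xB; have := card_nbhd_lt xB.
case: (e_cactus blockB) => [[_ [_ deg2]] | [a [b [_ _ ->]]] | [a ->]].
- by rewrite deg2.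
- by rewrite cards2; case: (_ != _); lia.
- by rewrite cards1; lia.
Qed.

Lemma nbhd_in_setD_component x (W : {set T}) z a :
  x \notin W -> z \in W -> ~~ connect_in ((x |: W) :\ z) a x ->
  nbhd_in e (W :\: component (W :\ z) a) x = nbhd_in e W x.
Proof.
move=> xW zW aNx; apply/eqP; rewrite eqEsubset nbhd_in_mono ?subsetDl //.
apply/subsetP => u /setIdP [uW exu]; rewrite !inE uW exu !andbT.
apply: contra aNx => /andP [uWz au].
have sWz : W :\ z \subset (x |: W) :\ z by apply: setSD; apply: subsetUr.
apply: connect_trans (connect_in_sub sWz au) _.
apply: connect_in_edge; last by rewrite e_sym.
  by rewrite (subsetP sWz) // !inE uWz.
by rewrite !inE eqxx /= andbT; apply: contraNneq xW => ->.
Qed.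

Lemma cactus_card_nbhd_le2 x (W : {set T}) :
  x \notin W -> connected_set e W -> #|nbhd_in e W x| <= 2.
Proof.
(* For a cut vertex z of x |: W, a component K of W :\ z not reaching x carries
   no neighbour of x, so W :\: K is a smaller counterexample. *)
elim: {W}_.+1 {-2}W (ltnSn #|W|) => // n IH W ltWn xW cW.
rewrite leqNgt; apply/negP => deg3.
have [w /setIdP [wW exw]] : exists w, w \in nbhd_in e W x.
  by apply/set0Pn; rewrite -card_gt0; apply: leq_ltn_trans deg3.
suff nsep : nonseparable e (x |: W).
  have [B [sB nsepB maxB]] := maximal_superset nsep.
  have /subset_leq_card := nbhd_in_mono x (subset_trans (subsetUr [set x] W) sB).
  have := block_card_nbhd_le2 (conj nsepB maxB) (subsetP sB _ (setU11 x W)).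
  by move: deg3; lia.
split; first by apply/set0Pn; exists x; rewrite setU11.
split; first exact: (connected_setU1 cW wW exw).
move=> z; case/setU1P => [-> | zW]; first by rewrite setU1K.
have xz : x \in (x |: W) :\ z by rewrite !inE eqxx /= andbT; apply: contraNneq xW => ->.
apply: (connected_set_to xz) => a aS; apply: contraT => aNx.
have ax : a != x by apply: contraNneq aNx => ->; rewrite connect0.
have aW : a \in W :\ z by move: aS; rewrite !inE (negbTE ax).
set K := component (W :\ z) a.
have ltK : #|W :\: K| < #|W|.
  apply: proper_card; rewrite properEneq subsetDl andbT; apply/eqP => E.
  by move: (subsetP (subsetDl W [set z]) _ aW); rewrite -E inE mem_component.
have xK : x \notin W :\: K by rewrite inE (negbTE xW) andbF.
have := IH _ (leq_trans ltK ltWn) xK (connected_setD_component (a := a) cW zW).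
by rewrite nbhd_in_setD_component // leqNgt deg3.
Qed.

Definition hangs_from (U : {set T}) (v : T) (X : {set T}) : Prop :=
  [/\ v \in U, v \notin X, X \subset U, X != set0 &
      {in X, forall a, nbhd_in e U a \subset v |: X}].

Lemma hangs_from_low_degree (U : {set T}) v (X : {set T}) : hangs_from U v X ->
  exists x (Y : {set T}), hangs_from U x Y /\ {in Y, forall y, #|nbhd_in e U y| <= 2}.
Proof.
elim: {X}_.+1 {-2}X v (ltnSn #|X|) => // n IH X v ltXn hangX.
have [vU vX sXU X0 attX] := hangX.
case: (boolP [exists x in X, 2 < #|nbhd_in e U x|]) => [|/exists_inPn low]; last first.
  by exists v, X; split=> // y /low; rewrite ltnNge negbK.
case/exists_inP=> x xX deg3.
set Y := (v |: X) :\ x; set C := component Y v.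
have xv : x != v by apply: contraNneq vX => <-.
have vY : v \in Y by rewrite !inE eq_sym xv eqxx.
have vC : v \in C := mem_component vY.
have xC : x \notin C by rewrite !inE eqxx.
(* x has at most two neighbours in C, so one lies beyond C; the part of X beyond
   C hangs from x. *)
have /subsetPn [y yN yC] : ~~ (nbhd_in e U x \subset C).
  apply/negP => sNC; have : nbhd_in e U x \subset nbhd_in e C x.
    by apply/subsetP => u uN; rewrite inE (subsetP sNC _ uN); case/setIdP: uN.
  move/subset_leq_card; have := cactus_card_nbhd_le2 xC (connected_component vY).
  by move: deg3; lia.
set X' := (X :\ x) :\: C.
have sX'X : X' \subset X := subset_trans (subsetDl _ _) (subsetDl _ _).
have ltX' : #|X'| < n.
  have : #|X :\ x| < #|X| by rewrite (cardsD1 x X) xX.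
  by have := subset_leq_card (subsetDl (X :\ x) C); rewrite -/X'; lia.
apply: (IH X' x ltX'); split.
- exact: subsetP sXU _ xX.
- by rewrite !inE eqxx andbF.
- exact: subset_trans sX'X sXU.
- apply/set0Pn; exists y.
  have /setIdP [yU exy] := yN.
  have yx : y != x by rewrite eq_sym (edge_neq exy).
  have yv : y != v by apply: contraNneq yC => ->.
  have := subsetP (attX x xX) _ yN; rewrite in_setU1 (negbTE yv) /= => yX.
  by rewrite in_setD in_setD1 yC yx yX.
- move=> a aX'; apply/subsetP => u uN.
  have /and3P [aC ax aX] : [&& a \notin C, a != x & a \in X].
    by move: aX'; rewrite in_setD in_setD1.
  have uvX := subsetP (attX a aX) _ uN.
  rewrite in_setU1; have [// | ux] := eqVneq u x.
  have uY : u \in Y by rewrite in_setD1 ux.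
  have uC : u \notin C.
    apply: contra aC => uC; apply: component_closed uC _ _.
      by rewrite in_setD1 ax setU1r.
    by rewrite e_sym; case/setIdP: uN.
  have uv : u != v by apply: contraNneq uC => ->.
  by move: uvX; rewrite in_setU1 (negbTE uv) in_setD in_setD1 uC ux.
Qed.

Lemma exists_hanging_low_degree (U : {set T}) : 1 < #|U| ->
  exists v (X : {set T}), hangs_from U v X /\ {in X, forall y, #|nbhd_in e U y| <= 2}.
Proof.
move=> U2; have [v vU] : exists v, v \in U by apply/set0Pn; rewrite -card_gt0; apply: ltnW.
apply: (@hangs_from_low_degree U v (U :\ v)); split=> //.
- by rewrite !inE eqxx.
- exact: subsetDl.
- by rewrite -card_gt0; move: U2; rewrite (cardsD1 v U) vU.
- by move=> a _; rewrite setD1K //; apply: nbhd_in_sub.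
Qed.

Lemma nbhd_in_hanging_out (U : {set T}) v (X : {set T}) u :
  hangs_from U v X -> u \in U -> u \notin X -> u != v -> nbhd_in e X u = set0.
Proof.
case=> _ _ _ _ attX uU uX uv; apply/setP => a; rewrite !inE; apply/negP => /andP [aX eua].
have /(subsetP (attX a aX)) : u \in nbhd_in e U a by rewrite inE uU e_sym.
by rewrite in_setU1 (negbTE uv) (negbTE uX).
Qed.

Variable k : nat.
Hypothesis k_ge2 : 2 <= k.

Definition capped (S : {set T}) (c : T -> nat) : Prop :=
  {in S, forall u, #|nbhd_in e S u| <= c u}.

Definition weight (c : T -> nat) (A : {set T}) : nat := \sum_(u in A) (k.+1 - c u).

Definition cheap_capping (U : {set T}) (c : T -> nat) : Prop :=
  exists D : {set T}, [/\ D \subset U, capped (U :\: D) c & k.+1 * #|D| < weight c U].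

Lemma weight_ge_card (c : T -> nat) (A : {set T}) :
  {in A, forall u, c u <= k} -> #|A| <= weight c A.
Proof.
by move=> c_le; rewrite -sum1_card; apply: leq_sum => u /c_le; rewrite subn_gt0 ltnS.
Qed.

Lemma weight_setD (c : T -> nat) (U A : {set T}) :
  A \subset U -> weight c U = weight c A + weight c (U :\: A).
Proof. by move=> sAU; rewrite /weight (big_setID A) /= (setIidPr sAU). Qed.

Lemma capped_glue (U A DA D' : {set T}) (c : T -> nat) :
  {in U :\: A, forall u, #|nbhd_in e (A :\: DA) u| <= c u} ->
  {in A :\: DA, forall y, #|nbhd_in e (U :\: DA) y| <= c y} ->
  capped ((U :\: A) :\: D') (fun u => c u - #|nbhd_in e (A :\: DA) u|) ->
  capped (U :\: (D' :|: DA)) c.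
Proof.
move=> capUA capA capD' u; rewrite setDUr in_setI => /andP [uD' uDA].
have [uA | uNA] := boolP (u \in A).
  apply: leq_trans (capA u _); last by rewrite in_setD uA andbT; case/setDP: uDA.
  by apply/subset_leq_card/nbhd_in_mono/subsetIr.
have uUA : u \in U :\: A by rewrite in_setD uNA; case/setDP: uD'.
have uUAD : u \in (U :\: A) :\: D' by rewrite in_setD uUA andbT; case/setDP: uD'.
have := capD' u uUAD; have := capUA u uUA.
have : nbhd_in e ((U :\: D') :&: (U :\: DA)) u \subset
       nbhd_in e ((U :\: A) :\: D') u :|: nbhd_in e (A :\: DA) u.
  apply/subsetP => w; rewrite !inE => /andP [/andP [/andP [wD' wU] /andP [wDA _]] euw].
  by rewrite euw wD' wU wDA /= !andbT; case: (w \in A).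
by move/subset_leq_card; rewrite cardsU /=; lia.
Qed.

Lemma cheap_capping_capped (U : {set T}) (c : T -> nat) :
  U != set0 -> {in U, forall u, c u <= k} -> capped U c -> cheap_capping U c.
Proof.
move=> U0 c_le capU; exists set0; rewrite sub0set setD0 cards0 muln0; split=> //.
by apply: leq_trans (weight_ge_card c_le); rewrite card_gt0.
Qed.

Section CappingStep.
Variables (U : {set T}) (c : T -> nat).
Hypothesis IH : forall (U' : {set T}) (c' : T -> nat), #|U'| < #|U| -> U' != set0 ->
  {in U', forall u, c' u <= k} -> cheap_capping U' c'.
Hypothesis c_le_k : {in U, forall u, c u <= k}.

(* The budget of A pays for deleting DA and for the capacity taken from the
   vertices outside A; it has to be strict only when nothing is left to recurse
   on. *)
Lemma cheap_capping_split (A DA : {set T}) :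
  DA \subset A -> A \subset U -> A != set0 ->
  {in U :\: A, forall u, #|nbhd_in e (A :\: DA) u| <= c u} ->
  {in A :\: DA, forall y, #|nbhd_in e (U :\: DA) y| <= c y} ->
  k.+1 * #|DA| + \sum_(u in U :\: A) #|nbhd_in e (A :\: DA) u| + (U :\: A == set0)
    <= weight c A ->
  cheap_capping U c.
Proof.
move=> sDA sAU A0 capUA capA budget; rewrite /cheap_capping (weight_setD c sAU).
have [UA0 | UA0] := eqVneq (U :\: A) set0.
  have eAU : A = U by apply/eqP; rewrite eqEsubset sAU -setD_eq0 UA0 /=.
  move: budget capA; rewrite UA0 big_set0 eqxx eAU /weight big_set0 addn0 addn1.
  move=> budget capA; exists DA.
  by split; [exact: subset_trans sDA sAU | exact: capA | rewrite addn0].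
pose c' u := c u - #|nbhd_in e (A :\: DA) u|.
have ltUA : #|U :\: A| < #|U|.
  rewrite cardsD (setIidPr sAU) -subn_gt0 subKn ?card_gt0 //.
  exact: subset_leq_card.
have c'_le : {in U :\: A, forall u, c' u <= k}.
  by move=> u /setDP [uU _]; apply: leq_trans (leq_subr _ _) (c_le_k uU).
have [D' [sD' capD' costD']] := IH ltUA UA0 c'_le.
exists (D' :|: DA); split.
- by rewrite subUset (subset_trans sDA sAU) (subset_trans sD' (subsetDl _ _)).
- exact: capped_glue capUA capA capD'.
have weightE : weight c' (U :\: A) =
    weight c (U :\: A) + \sum_(u in U :\: A) #|nbhd_in e (A :\: DA) u|.
  rewrite /weight -big_split /=; apply: eq_bigr => u uUA.
  by have := capUA u uUA; have := c_le_k (subsetP (subsetDl _ _) _ uUA); rewrite /c'; lia.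
have cardDD : k.+1 * #|D' :|: DA| <= k.+1 * #|D'| + k.+1 * #|DA|.
  by rewrite -mulnDr leq_mul2l cardsU leq_subr orbT.
by move: budget costD'; rewrite (negbTE UA0) weightE; lia.
Qed.

Lemma cheap_capping_zero_cap y : 1 < #|U| -> y \in U -> c y = 0 -> cheap_capping U c.
Proof.
move=> U2 yU cy0; apply: (@cheap_capping_split [set y] [set y]); rewrite ?setDv.
- by [].
- by rewrite sub1set.
- by apply/set0Pn; exists y; rewrite set11.
- by move=> u _; rewrite nbhd_in_set0 cards0.
- by move=> w; rewrite inE.
have -> : (U :\: [set y] == set0) = false.
  by apply/negbTE; rewrite -card_gt0; move: U2; rewrite (cardsD1 y U) yU.
rewrite big1 => [|u _]; last by rewrite nbhd_in_set0 cards0.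
by rewrite /weight big_set1 cards1 cy0 muln1 !addn0.
Qed.

Section Hanging.
Variables (v : T) (X : {set T}).
Hypotheses (hangX : hangs_from U v X) (capX : {in X, forall y, #|nbhd_in e U y| <= c y}).

Lemma cheap_capping_hanging_sparse : #|nbhd_in e X v| <= c v -> cheap_capping U c.
Proof.
have [vU vX sXU X0 _] := hangX.
have out u : u \in U :\: X -> u != v -> nbhd_in e X u = set0.
  by case/setDP=> uU uX; apply: (nbhd_in_hanging_out hangX uU uX).
move=> degv; apply: (@cheap_capping_split X set0); rewrite ?setD0 ?sub0set //.
- move=> u uUX; have [-> // | uv] := eqVneq u v.
  by rewrite out ?cards0.
have vUX : v \in U :\: X by rewrite in_setD vX.
have -> : (U :\: X == set0) = false by apply/negbTE/set0Pn; exists v.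
rewrite cards0 muln0 add0n addn0 (big_setD1 v vUX) /= big1 ?addn0.
  apply: leq_trans (subset_leq_card (nbhd_in_sub X v)) (weight_ge_card _).
  by move=> u /(subsetP sXU); apply: c_le_k.
by move=> u; rewrite in_setD1 => /andP [uv uUX]; rewrite out ?cards0.
Qed.

Lemma cheap_capping_hanging_dense : c v < #|nbhd_in e X v| -> cheap_capping U c.
Proof.
have [vU vX sXU X0 _] := hangX.
move=> degv; apply: (@cheap_capping_split (v |: X) [set v]); rewrite ?setU1K //.
- by rewrite sub1set setU11.
- by rewrite subUset sub1set vU.
- by apply/set0Pn; exists v; rewrite setU11.
- move=> u /setDP [uU]; rewrite in_setU1 negb_or => /andP [uv uX].
  by rewrite (nbhd_in_hanging_out hangX) ?cards0.
- move=> y yX; apply: leq_trans (capX yX).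
  by apply/subset_leq_card/nbhd_in_mono/subsetDl.
rewrite cards1 muln1 big1 => [|u /setDP [uU]]; last first.
  rewrite in_setU1 negb_or => /andP [uv uX].
  by rewrite (nbhd_in_hanging_out hangX) ?cards0.
have := weight_ge_card (fun u uX => c_le_k (subsetP sXU u uX)).
have := subset_leq_card (nbhd_in_sub X v); have := c_le_k vU.
by rewrite /weight (big_setU1 _ vX) /=; case: (_ == set0); lia.
Qed.

End Hanging.

Section DegreeTwo.
Variables (y z z' : T).
Hypotheses (c_pos : {in U, forall u, 0 < c u}) (yU : y \in U) (cy : c y = 1).
Hypotheses (Ny : nbhd_in e U y = [set z; z']) (zz' : z != z').

Lemma cheap_capping_degree2_lt : c z < k -> cheap_capping U c.
Proof.
have [zU z'U eyz eyz'] := nbhd_in_set2 Ny.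
have yz : y != z := edge_neq eyz.
have AD : [set y; z] :\ z = [set y] by rewrite setUC setU1K // in_set1 eq_sym.
move=> czk; apply: (@cheap_capping_split [set y; z] [set z]); rewrite ?AD.
- by rewrite sub1set set22.
- by rewrite subUset !sub1set yU.
- by apply/set0Pn; exists y; rewrite set21.
- move=> u /setDP [uU _]; apply: leq_trans (c_pos uU).
  by rewrite -(cards1 y) subset_leq_card ?nbhd_in_sub.
- move=> w /set1P ->; rewrite nbhd_in_setD Ny setU1K ?cards1 ?cy //.
  by rewrite in_set1.
have z'UA : z' \in U :\: [set y; z].
  by rewrite !inE z'U negb_or eq_sym (negbTE (edge_neq eyz')) eq_sym zz'.
have -> : (U :\: [set y; z] == set0) = false by apply/negbTE/set0Pn; exists z'.
have : #|nbhd_in e (U :\: [set y; z]) y| <= 1.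
  rewrite nbhd_in_setD Ny -(cards1 z') subset_leq_card //.
  by apply/subsetP => w; rewrite !inE => /andP [/norP [_ /negbTE ->]].
have yNz : y \notin [set z] by rewrite in_set1.
rewrite sum_card_nbhd_sym big_set1 cards1 /weight (big_setU1 _ yNz) big_set1 cy /=.
by lia.
Qed.

Lemma cheap_capping_degree2_eq : c z = k -> #|nbhd_in e U z| <= 2 -> cheap_capping U c.
Proof.
have [zU z'U eyz eyz'] := nbhd_in_set2 Ny.
have yNz : y \notin [set z] by rewrite in_set1 (edge_neq eyz).
have z'Nyz : z' \notin [set y; z].
  by rewrite !inE negb_or eq_sym (edge_neq eyz') eq_sym zz'.
set A := z' |: [set y; z].
have NyA : nbhd_in e U y \subset A.
  by rewrite Ny; apply/subsetP => w; rewrite !inE => /orP [] ->; rewrite ?orbT.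
move=> cz degz; apply: (@cheap_capping_split A [set z']); rewrite ?setU1K //.
- by rewrite sub1set setU11.
- by rewrite subUset sub1set z'U subUset !sub1set yU zU.
- by apply/set0Pn; exists z'; rewrite setU11.
- move=> u /setDP [uU uA]; apply: leq_trans (c_pos uU).
  rewrite -(cards1 z) subset_leq_card //.
  apply/subsetP => w; rewrite !inE => /andP [/orP [/eqP wy | //] euw].
  by move: uA; rewrite (subsetP NyA) // inE uU -wy e_sym.
- move=> w; rewrite !inE => /orP [] /eqP ->.
    rewrite cy nbhd_in_setD Ny -(cards1 z) subset_leq_card //.
    by apply/subsetP => w'; rewrite !inE => /andP [/negP wz' /orP [// | /wz' []]].
  rewrite cz; apply: leq_trans k_ge2; apply: leq_trans degz.
  by apply/subset_leq_card/nbhd_in_mono/subsetDl.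
rewrite cards1 muln1 sum_card_nbhd_sym (big_setU1 _ yNz) big_set1 /=.
have -> : nbhd_in e (U :\: A) y = set0 by rewrite nbhd_in_setD; apply/eqP; rewrite setD_eq0.
have zfew : #|nbhd_in e (U :\: A) z| + (U :\: A == set0) <= 1.
  have [-> | _] := eqVneq (U :\: A) set0; first by rewrite nbhd_in_set0 cards0.
  have yNz' : y \in nbhd_in e U z by rewrite inE yU e_sym.
  have : nbhd_in e (U :\: A) z \subset nbhd_in e U z :\ y.
    by rewrite nbhd_in_setD; apply: setDS; rewrite sub1set !inE eqxx orbT.
  by move/subset_leq_card; have := cardsD1 y (nbhd_in e U z); rewrite yNz'; lia.
rewrite /weight (big_setU1 _ z'Nyz) (big_setU1 _ yNz) big_set1 /= cy cz.
by rewrite cards0; have := c_le_k z'U; lia.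
Qed.

End DegreeTwo.

Lemma cheap_capping_step : U != set0 -> cheap_capping U c.
Proof.
move=> U0; case: (boolP [forall u in U, #|nbhd_in e U u| <= c u]) => [/forall_inP|].
  exact: cheap_capping_capped.
case/forall_inPn=> u0 u0U; rewrite -ltnNge => u0bad.
have U2 : 1 < #|U| by have := card_nbhd_lt u0U; lia.
case: (pickP [pred y in U | c y == 0]) => [y /andP [yU /eqP cy0] | c0].
  exact: cheap_capping_zero_cap U2 yU cy0.
have c_pos : {in U, forall u, 0 < c u}.
  by move=> u uU; have := c0 u; rewrite /= uU lt0n => /negbT.
have [v [X [hangX lowX]]] := exists_hanging_low_degree U2.
case: (boolP [forall y in X, #|nbhd_in e U y| <= c y]) => [/forall_inP capX|].
  have [degv | degv] := leqP #|nbhd_in e X v| (c v).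
    exact: cheap_capping_hanging_sparse hangX capX degv.
  exact: cheap_capping_hanging_dense hangX capX degv.
case/forall_inPn=> y yX; rewrite -ltnNge => ybad.
have [vU vX sXU _ attX] := hangX.
have yU := subsetP sXU y yX.
have cy : c y = 1 by have := lowX y yX; have := c_pos y yU; lia.
have /cards2P [z1 [z2 [z12 Ny]]] : #|nbhd_in e U y| == 2.
  by have := lowX y yX; have := c_pos y yU; lia.
have via z z' : z \in X -> z != z' -> nbhd_in e U y = [set z; z'] -> cheap_capping U c.
  move=> zX zz' Nyz; have [czk | czk] := ltnP (c z) k.
    exact: cheap_capping_degree2_lt c_pos yU cy Nyz zz' czk.
  apply: cheap_capping_degree2_eq c_pos yU cy Nyz zz' _ (lowX z zX).
  by apply/eqP; rewrite eqn_leq czk c_le_k // (subsetP sXU).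
have NyX := attX y yX; rewrite Ny in NyX.
have [z1X | z1X] := boolP (z1 \in X); first exact: via z1 z2 z1X z12 Ny.
have /eqP z1v : z1 == v.
  by move: (subsetP NyX z1 (set21 _ _)); rewrite in_setU1 (negbTE z1X) orbF.
have z2X : z2 \in X.
  by move: (subsetP NyX z2 (set22 _ _)); rewrite in_setU1 -z1v eq_sym (negbTE z12).
by apply: (via z2 z1 z2X); rewrite 1?eq_sym // Ny setUC.
Qed.

End CappingStep.

Lemma cheap_capping_exists (U : {set T}) (c : T -> nat) :
  U != set0 -> {in U, forall u, c u <= k} -> cheap_capping U c.
Proof.
elim: {U}_.+1 {-2}U (ltnSn #|U|) c => // n IHn U ltUn c U0 c_le.
apply: (cheap_capping_step _ c_le U0) => U' c' ltU' U'0 c'_le.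
exact: (IHn U' (leq_trans ltU' (ltnSE ltUn)) c' U'0 c'_le).
Qed.

End Cactus.

Theorem lemma4p4 (T : finType) (e : rel T) (k : nat) :
  2 <= k -> 0 < #|T| -> simple_graph e -> cactus e ->
  (k * #|T|) %/ k.+1 + 1 <= alpha_k e k.
Proof.
move=> k_ge2 T_gt0 [e_sym e_irr] e_cactus.
have setT0 : [set: T] != set0 by rewrite -card_gt0 cardsT.
have [D [_ capD costD]] :=
  cheap_capping_exists e_sym e_irr e_cactus k_ge2 setT0 (fun u _ => leqnn k).
have weightT : weight k (fun=> k) [set: T] = #|T|.
  by rewrite /weight subSnn sum1_card cardsT.
have sparseD : k_sparse e k (~: D) by apply/forall_inP; rewrite -setTD; exact: capD.
have alpha_ge : #|~: D| <= alpha_k e k :=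
  @leq_bigmax_cond _ (k_sparse e k) (fun S => #|S|) _ sparseD.
move: alpha_ge costD (leq_divM (k * #|T|) k.+1); rewrite cardsCs setCK weightT.
by move: ((k * #|T|) %/ k.+1) (alpha_k e k) #|T| #|D| => q a n d; nia.
Qed.
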